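(* Let $H$ be a Hilbert space with $\dim H\ge2$ and let $1<p<\infty$, $p\neq2$. An element $x=(x_k)\in\ell^p(H)$ is a left symmetric point (respectively, a right symmetric point) of $\ell^p(H)$ if and only if there exist an index $n$ and $h\in H$ such that $x_n=h$ and $x_k=0$ for all $k\neq n$.
   Context: $\ell^p(H)$ is the space of sequences $(x_k)_{k\in\mathbb{N}}$ in $H$ with $\|(x_k)\|_p=(\sum_k\|x_k\|^p)^{1/p}<\infty$. In a normed space $Y$ over $\mathbb{K}$, $x\perp_{BJ}y$ means $\|x+\lambda y\|\ge\|x\|$ for all $\lambda\in\mathbb{K}$; $x$ is a left symmetric point if $x\perp_{BJ}y$ implies $y\perp_{BJ}x$ for all $y$, and a right symmetric point if $y\perp_{BJ}x$ implies $x\perp_{BJ}y$ for all $y$. *)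

From HB Require Import structures.
From mathcomp Require Import all_boot all_order all_algebra.
From mathcomp Require Import all_classical all_reals all_analysis.
From mathcomp Require Import complex.
Set Implicit Arguments. Unset Strict Implicit. Unset Printing Implicit Defensive.
Import Order.TTheory GRing.Theory Num.Theory numFieldNormedType.Exports.
Local Open Scope ring_scope.

(* Scalar field K (R or C = R[i]) described through its real-part map [re]
   and its conjugation [cj]. Norms are real-valued (in R : realType). *)
Section Hilbert.
Variables (R : realType) (K : fieldType) (re : K -> R) (cj : K -> K).
Variable V : lmodType K.

Definition is_inner_product (ip : V -> V -> K) : Prop :=
  [/\ (forall (a : K) (x y z : V), ip (a *: x + y) z = a * ip x z + ip y z),
      (forall x y : V, ip y x = cj (ip x y)),
      (forall x : V, 0 <= re (ip x x)) &
      (forall x : V, ip x x = 0 -> x = 0)].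

Definition ipnorm (ip : V -> V -> K) (x : V) : R := Num.sqrt (re (ip x x)).

Definition ip_complete (ip : V -> V -> K) : Prop :=
  forall u : nat -> V,
    (forall e : R, 0 < e -> exists N : nat, forall m n : nat,
        (N <= m)%N -> (N <= n)%N -> ipnorm ip (u m - u n) < e) ->
    exists l : V, forall e : R, 0 < e -> exists N : nat, forall n : nat,
        (N <= n)%N -> ipnorm ip (u n - l) < e.

Definition is_Hilbert (ip : V -> V -> K) : Prop :=
  is_inner_product ip /\ ip_complete ip.

Definition dim_ge2 : Prop :=
  exists x y : V, forall a b : K, a *: x + b *: y = 0 -> a = 0 /\ b = 0.

Definition in_lp (ip : V -> V -> K) (p : R) (x : nat -> V) : Prop :=
  cvgn (series (fun k => powR (ipnorm ip (x k)) p)).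

Definition lpnorm (ip : V -> V -> K) (p : R) (x : nat -> V) : R :=
  powR (limn (series (fun k => powR (ipnorm ip (x k)) p))) p^-1.

Definition BJ_orth (ip : V -> V -> K) (p : R) (x y : nat -> V) : Prop :=
  forall l : K, lpnorm ip p x <= lpnorm ip p (fun k => x k + l *: y k).

Definition left_symmetric (ip : V -> V -> K) (p : R) (x : nat -> V) : Prop :=
  forall y, in_lp ip p y -> BJ_orth ip p x y -> BJ_orth ip p y x.

Definition right_symmetric (ip : V -> V -> K) (p : R) (x : nat -> V) : Prop :=
  forall y, in_lp ip p y -> BJ_orth ip p y x -> BJ_orth ip p x y.

Definition single_supported (x : nat -> V) : Prop :=
  exists (n : nat) (h : V), x n = h /\ forall k : nat, k <> n -> x k = 0.

Definition cor318_for : Prop :=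
  forall (ip : V -> V -> K), is_Hilbert ip -> dim_ge2 ->
  forall p : R, 1 < p -> p != 2 ->
  forall x : nat -> V, in_lp ip p x ->
    (left_symmetric ip p x <-> single_supported x) /\
    (right_symmetric ip p x <-> single_supported x).

End Hilbert.

From HB Require Import structures.
From mathcomp Require Import all_boot all_order all_algebra.
From mathcomp Require Import all_classical all_reals all_analysis.
From mathcomp Require Import complex.
From mathcomp Require Import ring lra.
Set Implicit Arguments. Unset Strict Implicit. Unset Printing Implicit Defensive.
Import Order.TTheory GRing.Theory Num.Theory numFieldNormedType.Exports.
Local Open Scope classical_set_scope.
Local Open Scope ring_scope.

(* For 1 < p the map x |-> ||x||_p^p on l^p(H) is convex and differentiable, so
   x is Birkhoff-James orthogonal to y iff its derivative
   sum_k ||x_k||^(p-2) <y_k, x_k> vanishes: the tangent inequality for t |-> t^p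
   together with Cauchy-Schwarz gives one direction, a first-order descent the
   other.  Every perturbation needed below differs from a scalar multiple of a
   fixed sequence in finitely many coordinates only, so only finite sums are
   ever differentiated.
   If x is supported on one coordinate n, either orthogonality relation between
   x and y forces <y_n, x_n> = 0, and then the other one holds.  If x_i = a and
   x_j = b are both nonzero, test x against y with y_i = a + v, y_j = -mu b and
   v orthogonal to a: x _|_ y amounts to ||a||^p = mu ||b||^p, whereas y _|_ x
   amounts to ||a + v||^(p-2) ||a||^2 = mu^(p-1) ||b||^p.  As p <> 2 and
   dim H >= 2, v can be chosen to make these two conditions incompatible, and
   choosing mu to satisfy one of them breaks left, resp. right, symmetry. *)

Section SeriesOffset.
Variable R : realType.

Lemma big_nat_supported (d : nat -> R) (s : seq nat) n :
  uniq s -> all (fun k => k < n)%N s -> {in [predC s], d =1 fun=> 0} ->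
  \sum_(0 <= k < n) d k = \sum_(k <- s) d k.
Proof.
move=> us /allP sn d0; rewrite (bigID (mem s)) /= [X in _ + X]big1 ?addr0; last first.
  by move=> k ks; apply: d0.
rewrite -big_filter; apply/perm_big/uniq_perm => [||k].
- by rewrite filter_uniq // iota_uniq.
- exact: us.
rewrite mem_filter mem_index_iota andbC; apply/andP/idP => [[]//|ks].
by split=> //; apply: sn.
Qed.

Lemma series_offset (f g : nat -> R) (c : R) (s : seq nat) :
  uniq s -> {in [predC s], forall k, g k = c * f k} -> cvgn (series f) ->
  series g @ \oo --> c * limn (series f) + \sum_(k <- s) (g k - c * f k).
Proof.
move=> us gf cf.
have {}gf : forall n, all (fun k => k < n)%N s ->
    series g n = c * series f n + \sum_(k <- s) (g k - c * f k).
  move=> n sn; rewrite /series /= mulr_sumr -(big_nat_supported us sn); last first.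
    by move=> k /gf ->; rewrite subrr.
  by rewrite -big_split; apply: eq_bigr => k _ /=; rewrite addrCA subrr addr0.
have near_gf : {near \oo, (fun n => c * series f n + \sum_(k <- s) (g k - c * f k))
                           =1 series g}.
  near=> n; apply/esym/gf; near: n.
  exists (\max_(k <- s) k).+1 => // n /= sn; apply/allP => k ks.
  by apply: leq_ltn_trans sn; apply: leq_bigmax_seq.
apply: cvg_trans (near_eq_cvg near_gf) _.
by apply: cvgD; [apply: cvgMr | apply: cvg_cst].
Unshelve. all: by end_near.
Qed.

Lemma sum_le_limn_series (f : nat -> R) (s : seq nat) :
  uniq s -> (forall k, 0 <= f k) -> cvgn (series f) ->
  \sum_(k <- s) f k <= limn (series f).
Proof.
move=> us f0 cf; pose g k := if k \in s then 0 else f k.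
have gf : {in [predC s], forall k, g k = 1 * f k}.
  by move=> k; rewrite inE /g mul1r => /negPf ->.
have cg := series_offset us gf cf.
have : 0 <= limn (series g).
  apply: limr_ge; first exact: cvgP cg.
  by near=> n; apply: sumr_ge0 => k _; rewrite /g; case: ifP.
rewrite (cvg_lim _ cg) // mul1r (eq_big_seq (fun k => - f k)) ?sumrN ?subr_ge0 //.
by move=> k ks; rewrite /g ks mul1r sub0r.
Unshelve. all: by end_near.
Qed.

End SeriesOffset.

Section RealAnalysis.
Variable R : realType.
Implicit Types p r s A : R.

Lemma powR_tangent_le p s A : 1 < p -> 0 <= s -> 0 < A ->
  A `^ p + p * A `^ (p - 1) * (s - A) <= s `^ p.
Proof.
move=> p1 s0 A0; have p0 : 0 < p := lt_trans ltr01 p1.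
have pm1 : p - 1 != 0 by rewrite subr_eq0 gt_eqF.
set q := p / (p - 1).
have q0 : 0 < q by rewrite divr_gt0 // subr_gt0.
have pq : p^-1 + q^-1 = 1 by rewrite /q invf_div; field; rewrite gt_eqF.
have young := conjugate_powR s0 (powR_ge0 A (p - 1)) p0 q0 pq.
rewrite -powRrM (_ : (p - 1) * q = p) in young; last by rewrite /q; field.
have BA : A `^ (p - 1) * A = A `^ p by rewrite mulrC mulr_powRB1 // ltW.
move: young BA; set B := A `^ (p - 1); set Ap := A `^ p; set sp := s `^ p.
move=> young BA.
have key : p * (s * B) <= sp + (p - 1) * Ap.
  have -> : sp + (p - 1) * Ap = p * (sp / p + Ap / q).
    by rewrite /q; field; rewrite pm1 gt_eqF.
  by rewrite ler_pM2l.
have -> : Ap + p * B * (s - A) = Ap + p * (s * B) - p * Ap by rewrite -BA; ring.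
lra.
Qed.

Lemma powR_mul_exprn A r n : 0 < A -> A `^ r * A ^+ n = A `^ (r + n%:R).
Proof. by move=> A0; rewrite -powR_mulrn ?ltW // -powRD // (gt_eqF A0) implybT. Qed.

Lemma powR_mul_sqr A p : 0 < A -> A `^ (p - 2) * A ^+ 2 = A `^ p.
Proof. by move=> A0; rewrite powR_mul_exprn // subrK. Qed.

Lemma powR_mul_self A p : 0 < A -> A `^ (p - 2) * A = A `^ (p - 1).
Proof. by move=> A0; rewrite -[X in _ * X]expr1 powR_mul_exprn //; congr (_ `^ _); ring. Qed.

Lemma powR_injective_pos r : r != 0 -> {in Num.pos &, injective (@powR R ^~ r)}.
Proof.
move=> r0 a b a0 b0; rewrite /powR (gt_eqF a0) (gt_eqF b0).
move=> /expR_inj /(mulfI r0) /ln_inj; exact.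
Qed.

Lemma powR_continuous_pos r A : 0 < A -> {for A, continuous (@powR R ^~ r)}.
Proof.
move=> A0; apply/differentiable_continuous/derivable1_diffP.
by apply: derivable_powR; rewrite in_itv /= A0.
Qed.

Lemma continuous_sum (I : eqType) (s : seq I) (f : I -> R -> R) x :
  {in s, forall i, {for x, continuous (f i)}} ->
  {for x, continuous (fun t => \sum_(i <- s) f i t)}.
Proof.
elim: s => [|i s IH] fc.
  have -> : (fun t => \sum_(i <- [::]) f i t) = fun=> 0.
    by apply: boolp.funext => t; rewrite big_nil.
  exact: cst_continuous.
have -> : (fun t => \sum_(j <- i :: s) f j t) = f i \+ fun t => \sum_(j <- s) f j t.
  by apply: boolp.funext => t; rewrite big_cons.
apply: continuousD.
  by apply: fc; rewrite mem_head.
by apply: IH => j js; apply: fc; rewrite in_cons js orbT.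
Qed.

Lemma powR_le_linear_near0 p M c : 1 < p -> 0 < c ->
  exists2 d, 0 < d & forall t : R, `|t| < d -> `|t| `^ p * M <= `|t| * c.
Proof.
move=> p1 c0; have pm1 : 0 < p - 1 by rewrite subr_gt0.
set X := c / (`|M| + 1); have X0 : 0 < X by rewrite divr_gt0 // ltr_pwDr.
exists (X `^ (p - 1)^-1); first exact: powR_gt0.
move=> t td; rewrite -mulr_powRB1 ?normr_ge0 ?(lt_trans ltr01 p1) // -mulrA.
apply: ler_wpM2l => //; apply: (@le_trans _ _ (`|t| `^ (p - 1) * `|M|)).
  by apply: ler_wpM2l; [exact: powR_ge0 | exact: ler_norm].
apply: (@le_trans _ _ (X * `|M|)).
  apply: ler_wpM2r => //; apply: ltW.
  have -> : X = (X `^ (p - 1)^-1) `^ (p - 1).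
    by rewrite -powRrM mulVf ?gt_eqF // powRr1 // ltW.
  by apply: gt0_ltr_powR; rewrite ?nnegrE ?powR_ge0 ?normr_ge0.
by rewrite /X mulrAC ler_pdivrMr ?ltr_pwDr // ler_pM2l // lerDl.
Qed.

Lemma exists_descent (E : R -> R) p M : 1 < p ->
  {for 0, continuous E} -> E 0 != 0 ->
  exists t, p * t * E t + `|t| `^ p * M < 0.
Proof.
move=> p1 Econt E0; have p0 : 0 < p := lt_trans ltr01 p1.
set e := `|E 0|; have e0 : 0 < e by rewrite normr_gt0.
have [d1 /= d10 Ed] : exists2 d : R, 0 < d & forall t, `|t| < d -> `|E 0 - E t| < e / 2.
  have := (cvgrPdist_lt _ _).1 Econt _ (divr_gt0 e0 (ltr0n _ 2)).
  move=> /(_ (nbhs_filter (0 : R))) /(nbhs_ballP (0 : R^o))[d d0 Ed].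
  exists d => // t td; apply: Ed.
  by rewrite /ball /= sub0r normrN.
have [d2 d20 tM] := powR_le_linear_near0 M p1 (divr_gt0 (mulr_gt0 p0 e0) (ltr0n _ 2)).
set r := Num.min d1 d2; have r0 : 0 < r by rewrite lt_min d10.
have rd1 : r <= d1 by rewrite ge_min lexx.
have rd2 : r <= d2 by rewrite ge_min lexx orbT.
pose t := - Num.sg (E 0) * (r / 2); exists t.
have ta : `|t| = r / 2 by rewrite normrM normrN normr_sg E0 mul1r gtr0_norm ?divr_gt0.
have tr : `|t| < r by rewrite ta ltr_pdivrMr // ltr_pMr // ltr1n.
have tE0 : t * E 0 = - (`|t| * e) by rewrite ta /e normrEsg /t; ring.
clearbody t.
have {tM} tM := tM t (lt_le_trans tr rd2).
have tEt := Ed t (lt_le_trans tr rd1).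
have ptEt : p * t * E t <= - (p * `|t| * e) + p * `|t| * `|E 0 - E t|.
  have -> : p * t * E t = - (p * `|t| * e) + p * (- (t * (E 0 - E t))).
    have -> : p * `|t| * e = p * (`|t| * e) by rewrite mulrA.
    by rewrite -[- (p * _)]mulrN -tE0; ring.
  by rewrite lerD2l -mulrA ler_pM2l // -normrM -normrN ler_norm.
have t0 : 0 < `|t| by rewrite ta divr_gt0.
have : p * `|t| * `|E 0 - E t| < p * `|t| * (e / 2) by rewrite ltr_pM2l ?mulr_gt0.
lra.
Qed.

End RealAnalysis.

Section Scalars.
Variables (R : realType) (K : fieldType).
Variables (emb : {rmorphism R -> K}) (cj : {rmorphism K -> K}) (re : {additive K -> R}).
Hypothesis reM : forall r a, re (emb r * a) = r * re a.
Hypothesis re1 : re 1 = 1.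
Hypothesis cj_emb : forall r, cj (emb r) = emb r.
Hypothesis reJ : forall a, re (cj a) = re a.
Hypothesis re_normsq_ge0 : forall a, 0 <= re (a * cj a).
Hypothesis re_normsq_eq0 : forall a, re (a * cj a) = 0 -> a = 0.
Hypothesis cj_fixed : forall a, cj a = a -> a = emb (re a).

Lemma re_emb r : re (emb r) = r.
Proof. by rewrite -[emb r]mulr1 reM re1 mulr1. Qed.

Definition absK (l : K) : R := Num.sqrt (re (l * cj l)).

Lemma absK_ge0 l : 0 <= absK l. Proof. exact: sqrtr_ge0. Qed.

Lemma absK_emb r : absK (emb r) = `|r|.
Proof. by rewrite /absK cj_emb -rmorphM re_emb -expr2 sqrtr_sqr. Qed.

Lemma absKM r l : absK (emb r * l) = `|r| * absK l.
Proof.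
rewrite /absK rmorphM cj_emb mulrACA -rmorphM reM sqrtrM ?sqr_ge0 //.
by rewrite -expr2 sqrtr_sqr.
Qed.

Section InnerProductSpace.
Variables (V : lmodType K) (ip : V -> V -> K).
Hypothesis ipH : is_inner_product re cj ip.

Local Notation Q x := (re (ip x x)).
Local Notation N x := (ipnorm re ip x).

Lemma ip0l z : ip 0 z = 0.
Proof.
case: ipH => ipL _ _ _; have := ipL 1 0 0 z; rewrite scaler0 addr0 mul1r => h.
by apply: (addrI (ip 0 z)); rewrite addr0 -h.
Qed.

Lemma ipDl x y z : ip (x + y) z = ip x z + ip y z.
Proof. by case: ipH => ipL _ _ _; rewrite -[x]scale1r ipL mul1r scale1r. Qed.

Lemma ipZl a x z : ip (a *: x) z = a * ip x z.
Proof. by case: ipH => ipL _ _ _; rewrite -[a *: x]addr0 ipL ip0l addr0. Qed.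

Lemma ipC x y : ip y x = cj (ip x y).
Proof. by case: ipH. Qed.

Lemma ip0r z : ip z 0 = 0.
Proof. by rewrite ipC ip0l rmorph0. Qed.

Lemma ipDr x y z : ip z (x + y) = ip z x + ip z y.
Proof. by rewrite ipC ipDl rmorphD -!ipC. Qed.

Lemma ipZr a x z : ip z (a *: x) = cj a * ip z x.
Proof. by rewrite ipC ipZl rmorphM -ipC. Qed.

Lemma ipxx_real x : ip x x = emb (Q x).
Proof. by apply: cj_fixed; rewrite -ipC. Qed.

Lemma re_ipxx_ge0 x : 0 <= Q x.
Proof. by case: ipH. Qed.

Lemma re_ipxx_eq0 x : Q x = 0 -> x = 0.
Proof.
by case: ipH => _ _ _ ip_def Qx0; apply: ip_def; rewrite ipxx_real Qx0 rmorph0.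
Qed.

Lemma ipnorm_ge0 x : 0 <= N x.
Proof. exact: sqrtr_ge0. Qed.

Lemma sqr_ipnorm x : N x ^+ 2 = Q x.
Proof. by rewrite sqr_sqrtr // re_ipxx_ge0. Qed.

Lemma ipnorm0 : N 0 = 0.
Proof. by rewrite /ipnorm ip0l raddf0 sqrtr0. Qed.

Lemma re_ipxx_gt0 x : x != 0 -> 0 < Q x.
Proof. by move=> x0; rewrite lt_def re_ipxx_ge0 andbT; apply: contra_neq x0 => /re_ipxx_eq0. Qed.

Lemma ipnorm_gt0 x : x != 0 -> 0 < N x.
Proof. by move=> x0; rewrite sqrtr_gt0 re_ipxx_gt0. Qed.

Lemma re_ipxx_addZ u w l :
  Q (u + l *: w) = Q u + 2 * re (l * ip w u) + re (l * cj l) * Q w.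
Proof.
rewrite ipDl !ipDr !ipZl !ipZr !raddfD /=.
rewrite [ip u w]ipC -rmorphM reJ [ip w w]ipxx_real mulrA [_ * emb _]mulrC reM.
by rewrite re_emb; ring.
Qed.

Lemma re_ipxx_add_emb u w t :
  Q (u + emb t *: w) = Q u + 2 * t * re (ip w u) + t ^+ 2 * Q w.
Proof. by rewrite re_ipxx_addZ reM cj_emb -rmorphM re_emb mulrA expr2. Qed.

Lemma ipnormZ l w : N (l *: w) = absK l * N w.
Proof.
have := re_ipxx_addZ 0 w l; rewrite add0r !ip0r mulr0 !raddf0 mulr0 !add0r.
by rewrite /ipnorm /absK => ->; rewrite sqrtrM.
Qed.

Lemma re_ip_le_ipnorm u v : re (ip u v) <= N u * N v.
Proof.
have [->|v0] := eqVneq v 0; first by rewrite ip0r raddf0 ipnorm0 mulr0.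
have Qv := re_ipxx_gt0 v0; set r := re (ip u v).
have := re_ipxx_ge0 (u + emb (- (r / Q v)) *: v).
rewrite re_ipxx_add_emb [ip v u]ipC reJ -/r.
have -> : Q u + 2 * - (r / Q v) * r + (- (r / Q v)) ^+ 2 * Q v = Q u - r ^+ 2 / Q v.
  by field; rewrite gt_eqF.
rewrite subr_ge0 ler_pdivrMr // -!sqr_ipnorm -exprMn => rN.
apply: le_trans (ler_norm r) _.
by rewrite -ler_sqr ?nnegrE ?mulr_ge0 ?ipnorm_ge0 // real_normK ?num_real.
Qed.

Lemma re_ipxx_pyth a v : ip v a = 0 -> Q (a + v) = Q a + Q v.
Proof.
move=> va; have := re_ipxx_addZ a v 1; rewrite scale1r => ->.
by rewrite rmorph1 !mul1r va raddf0 mulr0 addr0 re1 mul1r.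
Qed.

Lemma ipnorm_lt_pyth a v : a != 0 -> v != 0 -> ip v a = 0 -> N a < N (a + v).
Proof.
move=> a0 v0 va; rewrite ltr_sqrt ?re_ipxx_pyth ?ltrDl ?re_ipxx_gt0 //.
by rewrite addr_gt0 // re_ipxx_gt0.
Qed.

Lemma exists_orthogonal a : a != 0 -> dim_ge2 V -> exists2 u, u != 0 & ip u a = 0.
Proof.
move=> a0 [e1 [e2 indep]].
have Qa : ip a a != 0 by rewrite ipxx_real fmorph_eq0 gt_eqF // re_ipxx_gt0.
pose proj e := e - (ip e a / ip a a) *: a.
have proj_orth e : ip (proj e) a = 0.
  by rewrite /proj -scaleNr ipDl ipZl mulNr divfK // subrr.
have [h1|] := eqVneq (proj e1) 0; last by exists (proj e1).
have [h2|] := eqVneq (proj e2) 0; last by exists (proj e2).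
move: h1 h2 => /eqP; rewrite subr_eq0 => /eqP E1 /eqP; rewrite subr_eq0 => /eqP E2.
set c1 := ip e1 a / _ in E1; set c2 := ip e2 a / _ in E2.
have [c20 c10] : c2 = 0 /\ - c1 = 0.
  by apply: indep; rewrite E1 E2 !scalerA mulNr scaleNr mulrC subrr.
have e10 : e1 = 0 by rewrite E1 -[c1]opprK c10 oppr0 scale0r.
have := indep 1 0; rewrite e10 scaler0 scale0r addr0 => /(_ erefl)[/eqP].
by rewrite oner_eq0.
Qed.

Variable p : R.
Hypothesis p1 : 1 < p.

Let p0 : 0 < p. Proof. exact: lt_trans ltr01 p1. Qed.

Lemma powR_ipnorm_tangent u w :
  N u `^ p + p * N u `^ (p - 2) * re (ip w u) <= N (u + w) `^ p.
Proof.
have [->|u0] := eqVneq u 0.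
  by rewrite ip0r raddf0 mulr0 addr0 ipnorm0 powR0 ?gt_eqF // powR_ge0.
have Nu0 := ipnorm_gt0 u0.
have CS : N u ^+ 2 + re (ip w u) <= N (u + w) * N u.
  by rewrite sqr_ipnorm -raddfD -ipDl re_ip_le_ipnorm.
apply: le_trans (powR_tangent_le p1 (ipnorm_ge0 _) Nu0); rewrite lerD2l.
rewrite -powR_mul_self // -!mulrA ler_pM2l // ler_pM2l ?powR_gt0 //.
by rewrite mulrBr -expr2 lerBrDl mulrC.
Qed.

(* [p * slope z w t] is the derivative of [fun t => N (z + t w) ^ p] at [t]. *)
Definition slope (z w : V) (t : R) : R :=
  N (z + emb t *: w) `^ (p - 2) * (re (ip w z) + t * Q w).

Lemma slope0 z w : slope z w 0 = N z `^ (p - 2) * re (ip w z).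
Proof. by rewrite /slope rmorph0 scale0r addr0 mul0r addr0. Qed.

Lemma powR_ipnorm_le_slope z w t :
  N (z + emb t *: w) `^ p <= N z `^ p + p * t * slope z w t.
Proof.
have := powR_ipnorm_tangent (z + emb t *: w) (emb (- t) *: w).
rewrite -addrA -scalerDl -rmorphD subrr rmorph0 scale0r addr0.
rewrite ipZl (reM (- t)) ipDr ipZr cj_emb (raddfD re) (reM t) [ip w w]ipxx_real re_emb.
rewrite /slope; lra.
Qed.

Lemma slope_continuous z w : z != 0 -> {for 0, continuous (slope z w)}.
Proof.
move=> z0; pose c := re (ip w z).
have -> : slope z w =
    fun t : R => Num.sqrt (Q z + 2 * t * c + t ^+ 2 * Q w) `^ (p - 2) * (c + t * Q w).
  by apply: boolp.funext => t; rewrite /slope /ipnorm re_ipxx_add_emb.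
have affine_cont : {for 0, continuous (fun t : R => c + t * Q w)}.
  apply: continuousD; first exact: cst_continuous.
  by apply: continuousM; [exact: cvg_id | exact: cst_continuous].
have sqrt_cont :
    {for 0, continuous (fun t : R => Num.sqrt (Q z + 2 * t * c + t ^+ 2 * Q w))}.
  apply: continuous_comp; last exact: sqrt_continuous.
  by repeat first [exact: cst_continuous | exact: cvg_id | apply: continuousD | apply: continuousM].
have sqrt0 : 0 < Num.sqrt (Q z + 2 * 0 * c + 0 ^+ 2 * Q w).
  by rewrite mulr0 mul0r expr0n mul0r !addr0 sqrtr_gt0 re_ipxx_gt0.
apply: continuousM => //.
exact: continuous_comp sqrt_cont (@powR_continuous_pos _ (p - 2) _ sqrt0).
Qed.

(* The derivative at 0 of [fun l => \sum_(k <- s) N (z k + l w k) ^ p] in the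
   direction l is [p * re (l * grad z w s)]. *)
Definition grad (z w : nat -> V) (s : seq nat) : K :=
  \sum_(k <- s) emb (N (z k) `^ (p - 2)) * ip (w k) (z k).

Lemma re_grad z w s :
  re (grad z w s) = \sum_(k <- s) N (z k) `^ (p - 2) * re (ip (w k) (z k)).
Proof. by rewrite raddf_sum; apply: eq_bigr => k _; rewrite reM. Qed.

Lemma sum_powR_ipnorm_le_of_grad0 z w s : grad z w s = 0 ->
  forall l, \sum_(k <- s) N (z k) `^ p <= \sum_(k <- s) N (z k + l *: w k) `^ p.
Proof.
move=> g0 l; apply: le_trans (ler_sum _ (fun k _ => powR_ipnorm_tangent (z k) (l *: w k))).
rewrite big_split /= lerDl.
suff -> : \sum_(k <- s) p * N (z k) `^ (p - 2) * re (ip (l *: w k) (z k)) =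
          p * re (l * grad z w s) by rewrite g0 mulr0 raddf0 mulr0.
rewrite mulr_sumr raddf_sum mulr_sumr; apply: eq_bigr => k _.
by rewrite ipZl mulrCA reM mulrA.
Qed.

Lemma exists_sum_descent z w s M : {in s, forall k, z k != 0} ->
  re (grad z w s) != 0 -> exists t,
  \sum_(k <- s) N (z k + emb t *: w k) `^ p + `|t| `^ p * M < \sum_(k <- s) N (z k) `^ p.
Proof.
move=> z0 g0; pose E t := \sum_(k <- s) slope (z k) (w k) t.
have Econt : {for 0, continuous E}.
  by apply: continuous_sum => k ks; apply: slope_continuous; apply: z0.
have E0 : E 0 = re (grad z w s) by rewrite re_grad; apply: eq_bigr => k _; rewrite slope0.
have [|t tneg] := exists_descent M p1 Econt; first by rewrite E0.
have slope_le k := powR_ipnorm_le_slope (z k) (w k) t.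
exists t; apply: le_lt_trans (lerD (ler_sum _ (fun k _ => slope_le k)) (lexx _)) _.
by rewrite big_split /= -mulr_sumr -/(E t) -addrA gtrDl.
Qed.

Definition normp (z : nat -> V) (k : nat) : R := N (z k) `^ p.

Definition sum_normp (z : nat -> V) : R := limn (series (normp z)).

Lemma normp_ge0 z k : 0 <= normp z k.
Proof. exact: powR_ge0. Qed.

Lemma sum_normp_ge0 z : in_lp re ip p z -> 0 <= sum_normp z.
Proof.
by move=> zp; have := @sum_le_limn_series _ _ [::] isT (normp_ge0 z) zp; rewrite big_nil.
Qed.

Lemma sum_normp_offset (u y : nat -> V) c s : uniq s -> in_lp re ip p y ->
  {in [predC s], forall k, normp u k = c * normp y k} ->
  in_lp re ip p u /\
  sum_normp u = c * (sum_normp y - \sum_(k <- s) normp y k) + \sum_(k <- s) normp u k.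
Proof.
move=> us yp uy; have uc := @series_offset R (normp y) (normp u) c s us uy yp.
split; first exact: cvgP uc.
rewrite /sum_normp (cvg_lim _ uc) // sumrB -mulr_sumr.
set L := limn _; set U := \sum_(k <- s) normp u k; set Y := \sum_(k <- s) normp y k.
ring.
Qed.

Lemma lpnormE z : lpnorm re ip p z = sum_normp z `^ p^-1.
Proof. by []. Qed.

Lemma BJ_orthE x y : in_lp re ip p x ->
  (forall l, in_lp re ip p (fun k => x k + l *: y k)) ->
  BJ_orth re ip p x y <-> forall l, sum_normp x <= sum_normp (fun k => x k + l *: y k).
Proof.
move=> xp xyp; have ip0 : 0 < p^-1 by rewrite invr_gt0.
have mono a b : 0 <= a -> 0 <= b -> (a `^ p^-1 <= b `^ p^-1) = (a <= b).
  by move=> a0 b0; apply: (le_mono_in (gt0_ltr_powR ip0)); rewrite nnegrE.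
by split=> xy l; have := xy l;
  rewrite !lpnormE (mono _ _ (sum_normp_ge0 xp) (sum_normp_ge0 (xyp l))).
Qed.

Lemma normp_eq0 (z : nat -> V) k : z k = 0 -> normp z k = 0.
Proof. by rewrite /normp => ->; rewrite ipnorm0 powR0 // gt_eqF. Qed.

Lemma BJ_orth_supp_fst x y s : uniq s -> (forall k, k \notin s -> x k = 0) ->
  in_lp re ip p x -> in_lp re ip p y ->
  BJ_orth re ip p x y <-> forall l, \sum_(k <- s) normp x k <=
    absK l `^ p * (sum_normp y - \sum_(k <- s) normp y k) +
    \sum_(k <- s) N (x k + l *: y k) `^ p.
Proof.
move=> us x0 xp yp.
have x_off : {in [predC s], forall k, normp x k = 0 * normp y k}.
  by move=> k; rewrite inE mul0r => /x0; apply: normp_eq0.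
have [_ Sx] := @sum_normp_offset x y 0 s us yp x_off.
have xy_off l : {in [predC s], forall k,
    normp (fun k => x k + l *: y k) k = absK l `^ p * normp y k}.
  by move=> k; rewrite inE /normp => /x0 ->; rewrite add0r ipnormZ powRM ?absK_ge0 ?ipnorm_ge0.
have off l := @sum_normp_offset _ y _ s us yp (xy_off l).
rewrite (BJ_orthE xp (fun l => (off l).1)).
by rewrite Sx mul0r add0r; split=> xy l; move: (xy l); rewrite (off l).2.
Qed.

Lemma BJ_orth_supp_snd x y s : uniq s -> (forall k, k \notin s -> y k = 0) ->
  in_lp re ip p x ->
  BJ_orth re ip p x y <->
    forall l, \sum_(k <- s) normp x k <= \sum_(k <- s) N (x k + l *: y k) `^ p.
Proof.
move=> us y0 xp.
have xy_off l : {in [predC s], forall k, normp (fun k => x k + l *: y k) k = 1 * normp x k}.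
  by move=> k; rewrite inE /normp => /y0 ->; rewrite scaler0 addr0 mul1r.
have off l := @sum_normp_offset _ x _ s us xp (xy_off l).
rewrite (BJ_orthE xp (fun l => (off l).1)).
split=> xy l; move: (xy l); rewrite (off l).2 mul1r -addrA lerDl addrC subr_ge0 //.
Qed.

Lemma sum_normp_sub_ge0 y s : uniq s -> in_lp re ip p y ->
  0 <= sum_normp y - \sum_(k <- s) normp y k.
Proof.
move=> us yp; rewrite subr_ge0.
exact: (@sum_le_limn_series _ (normp y) s us (normp_ge0 y) yp).
Qed.

Lemma powR_ipnorm_le_orth z w l : ip w z = 0 -> N z `^ p <= N (z + l *: w) `^ p.
Proof.
move=> wz; apply: ge0_ler_powR; rewrite ?nnegrE ?ipnorm_ge0 ?(ltW p0) //.
rewrite ler_sqrt ?re_ipxx_ge0 // re_ipxx_addZ wz mulr0 raddf0 mulr0 addr0 lerDl.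
exact: mulr_ge0 (re_normsq_ge0 l) (re_ipxx_ge0 w).
Qed.

Lemma ip_eq0_of_min z w M :
  (forall l, N z `^ p <= absK l `^ p * M + N (z + l *: w) `^ p) -> ip w z = 0.
Proof.
move=> zmin; have [//|wz] := eqVneq (ip w z) 0; exfalso.
have z0 : z != 0 by apply: contra_neq wz => ->; rewrite ip0r.
pose mu := - cj (ip w z).
have g0 : re (grad (fun=> z) (fun=> mu *: w) [:: 0%N]) != 0.
  rewrite re_grad big_seq1 ipZl mulNr raddfN mulrN oppr_eq0 mulf_neq0 //.
    by rewrite gt_eqF // powR_gt0 // ipnorm_gt0.
  by rewrite mulrC; apply: contra_neq wz => /re_normsq_eq0.
have [|t] := exists_sum_descent (absK mu `^ p * M) _ g0; first by move=> k _.
rewrite !big_seq1 => tdesc.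
have := zmin (emb t * mu); rewrite absKM powRM ?normr_ge0 ?absK_ge0 // -scalerA.
lra.
Qed.

Lemma single_supported_left_symmetric x n : (forall k, k != n -> x k = 0) ->
  in_lp re ip p x -> left_symmetric re ip p x.
Proof.
move=> x0 xp y yp; have supp k : k \notin [:: n] -> x k = 0 by rewrite mem_seq1; apply: x0.
move=> /(BJ_orth_supp_fst (s := [:: n]) isT supp xp yp) xy.
have yx : ip (y n) (x n) = 0.
  by apply: (@ip_eq0_of_min _ _ (sum_normp y - normp y n)) => l; have := xy l; rewrite !big_seq1.
apply/(BJ_orth_supp_snd (s := [:: n]) isT supp yp) => l; rewrite !big_seq1.
apply: powR_ipnorm_le_orth.
by rewrite ipC yx rmorph0.
Qed.

Lemma single_supported_right_symmetric x n : (forall k, k != n -> x k = 0) ->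
  in_lp re ip p x -> right_symmetric re ip p x.
Proof.
move=> x0 xp y yp; have supp k : k \notin [:: n] -> x k = 0 by rewrite mem_seq1; apply: x0.
move=> /(BJ_orth_supp_snd (s := [:: n]) isT supp yp) yx.
have xy : ip (x n) (y n) = 0.
  by apply: (@ip_eq0_of_min _ _ 0) => l; have := yx l; rewrite !big_seq1 mulr0 add0r.
apply/(BJ_orth_supp_fst (s := [:: n]) isT supp xp yp) => l; rewrite !big_seq1.
apply: le_trans (@powR_ipnorm_le_orth (x n) (y n) l _) _; first by rewrite ipC xy rmorph0.
rewrite lerDr mulr_ge0 ?powR_ge0 //.
by have := sum_normp_sub_ge0 (s := [:: n]) isT yp; rewrite big_seq1.
Qed.

Lemma in_lp_supported x y s : uniq s -> (forall k, k \notin s -> y k = 0) ->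
  in_lp re ip p x -> in_lp re ip p y.
Proof.
move=> us y0 xp; have y_off : {in [predC s], forall k, normp y k = 0 * normp x k}.
  by move=> k; rewrite inE mul0r => /y0; apply: normp_eq0.
exact: (@sum_normp_offset y x 0 s us xp y_off).1.
Qed.

Lemma not_left_symmetric_of x y s : uniq s -> (forall k, k \notin s -> y k = 0) ->
  in_lp re ip p x -> {in s, forall k, y k != 0} ->
  grad x y s = 0 -> re (grad y x s) != 0 -> ~ left_symmetric re ip p x.
Proof.
move=> us y0 xp ynz gxy gyx xsym; have yp := in_lp_supported us y0 xp.
have xy : BJ_orth re ip p x y.
  by apply/(BJ_orth_supp_snd us y0 xp) => l; apply: sum_powR_ipnorm_le_of_grad0.
have /(BJ_orth_supp_fst us y0 yp xp) yx := xsym y yp xy.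
have [t] := exists_sum_descent (sum_normp x - \sum_(k <- s) normp x k) ynz gyx.
by have := yx (emb t); rewrite absK_emb /normp; lra.
Qed.

Lemma not_right_symmetric_of x y s : uniq s -> (forall k, k \notin s -> y k = 0) ->
  in_lp re ip p x -> {in s, forall k, x k != 0} ->
  grad y x s = 0 -> re (grad x y s) != 0 -> ~ right_symmetric re ip p x.
Proof.
move=> us y0 xp xnz gyx gxy xsym; have yp := in_lp_supported us y0 xp.
have yx : BJ_orth re ip p y x.
  apply/(BJ_orth_supp_fst us y0 yp xp) => l.
  apply: le_trans (sum_powR_ipnorm_le_of_grad0 gyx l) _.
  by rewrite lerDr mulr_ge0 ?powR_ge0 ?sum_normp_sub_ge0.
have /(BJ_orth_supp_snd us y0 xp) xy := xsym y yp yx.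
have [t] := exists_sum_descent 0 xnz gxy.
by have := xy (emb t); rewrite /normp mulr0 addr0; lra.
Qed.

Lemma exists_orthogonal_avoiding a r : p != 2 -> dim_ge2 V -> a != 0 ->
  exists2 v, ip v a = 0 & N (a + v) `^ (p - 2) != r.
Proof.
move=> p2 dim a0; have [Nar|] := eqVneq (N a `^ (p - 2)) r; last first.
  by exists 0; rewrite ?ip0l ?addr0.
have [u u0 ua] := exists_orthogonal a0 dim; exists u => //; rewrite -Nar.
have p20 : p - 2 != 0 by rewrite subr_eq0.
have Na_lt := ipnorm_lt_pyth a0 u0 ua.
have Na_pos : N a \in Num.pos by rewrite posrE ipnorm_gt0.
have Nau_pos : N (a + u) \in Num.pos by rewrite posrE (lt_trans (ipnorm_gt0 a0)).
apply/eqP => /(powR_injective_pos p20 Nau_pos Na_pos) Neq.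
by move: Na_lt; rewrite Neq ltxx.
Qed.

Definition two_point (i j : nat) (u1 u2 : V) (k : nat) : V :=
  if k == i then u1 else if k == j then u2 else 0.

Lemma two_point_supp i j u1 u2 k : k \notin [:: i; j] -> two_point i j u1 u2 k = 0.
Proof. by rewrite !inE /two_point => /norP[/negPf -> /negPf ->]. Qed.

Lemma two_point_fst i j u1 u2 : two_point i j u1 u2 i = u1.
Proof. by rewrite /two_point eqxx. Qed.

Lemma two_point_snd i j u1 u2 : i != j -> two_point i j u1 u2 j = u2.
Proof. by move=> ij; rewrite /two_point eq_sym (negPf ij) eqxx. Qed.

Lemma grad_two_point z w i j : i != j ->
  grad z w [:: i; j] = emb (N (z i) `^ (p - 2)) * ip (w i) (z i)
                     + emb (N (z j) `^ (p - 2)) * ip (w j) (z j).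
Proof. by move=> ij; rewrite /grad big_cons big_seq1. Qed.

Section TwoPoint.
Variables (x : nat -> V) (i j : nat) (v : V) (mu : R).
Hypotheses (ij : i != j) (ai : x i != 0) (bj : x j != 0) (va : ip v (x i) = 0).
Let y := two_point i j (x i + v) (emb (- mu) *: x j).

Lemma grad_to_two_point :
  grad x y [:: i; j] = emb (N (x i) `^ p - mu * N (x j) `^ p).
Proof.
rewrite /y grad_two_point // two_point_fst two_point_snd // ipDl va addr0 ipZl.
rewrite (ipxx_real (x i)) (ipxx_real (x j)) -!sqr_ipnorm -!rmorphM -rmorphD.
by rewrite !powR_mul_sqr ?ipnorm_gt0 // mulrCA powR_mul_sqr ?ipnorm_gt0 // mulNr.
Qed.

Lemma grad_from_two_point : 0 < mu ->
  grad y x [:: i; j] = emb (N (x i + v) `^ (p - 2) * N (x i) ^+ 2 - mu `^ (p - 1) * N (x j) `^ p).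
Proof.
move=> mu0; have be0 := ipnorm_gt0 bj.
rewrite /y grad_two_point // two_point_fst two_point_snd //.
rewrite ipDr [ip _ v]ipC va rmorph0 addr0 ipZr cj_emb (ipxx_real (x i)) (ipxx_real (x j)).
rewrite ipnormZ absK_emb normrN gtr0_norm // powRM ?(ltW mu0) ?ipnorm_ge0 //.
rewrite -!sqr_ipnorm -!rmorphM -rmorphD; apply: congr1.
rewrite -(@powR_mul_self _ mu p mu0) -(@powR_mul_sqr _ (N (x j)) p be0).
ring.
Qed.

End TwoPoint.

Lemma not_symmetric_of_two_nonzero x i j : p != 2 -> dim_ge2 V -> i != j ->
  x i != 0 -> x j != 0 -> in_lp re ip p x ->
  ~ left_symmetric re ip p x /\ ~ right_symmetric re ip p x.
Proof.
move=> p2 dim ij ai bj xp.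
have us : uniq [:: i; j] by rewrite /= inE ij.
have xnz : {in [:: i; j], forall k, x k != 0} by move=> k; rewrite !inE => /orP[] /eqP ->.
have al0 := ipnorm_gt0 ai; have be0 := ipnorm_gt0 bj.
move: al0 be0; set al := N (x i); set be := N (x j) => al0 be0.
set c := al `^ p / be `^ p; have c0 : 0 < c by rewrite divr_gt0 ?powR_gt0.
(* [grad x (y mu)] vanishes iff mu = c, and [grad (y mu) x] iff
   sg * al ^+ 2 = mu `^ (p - 1) * be `^ p; v makes these incompatible. *)
have [v va] := exists_orthogonal_avoiding (c `^ (p - 1) * be `^ p / al ^+ 2) p2 dim ai.
have av0 : 0 < N (x i + v).
  by rewrite sqrtr_gt0 re_ipxx_pyth // (lt_le_trans (re_ipxx_gt0 ai)) // lerDl re_ipxx_ge0.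
move: av0; set sg := N (x i + v) `^ (p - 2) => av0 sgc.
pose y mu := two_point i j (x i + v) (emb (- mu) *: x j).
have ysupp mu := @two_point_supp i j (x i + v) (emb (- mu) *: x j).
have ynz mu : 0 < mu -> {in [:: i; j], forall k, y mu k != 0}.
  move=> mu0 k; rewrite !inE => /orP[] /eqP ->; rewrite /y ?two_point_fst ?two_point_snd //.
    by apply: contraTneq av0 => ->; rewrite ipnorm0 ltxx.
  by rewrite scaler_eq0 fmorph_eq0 oppr_eq0 negb_or gt_eqF.
split.
  apply: (not_left_symmetric_of us (ysupp c) xp (ynz c c0)).
    by rewrite grad_to_two_point // /c divfK ?subrr ?rmorph0 // gt_eqF // powR_gt0.
  rewrite grad_from_two_point // re_emb subr_eq0; apply: contra_neq sgc => <-.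
  by rewrite mulfK // expf_neq0 // gt_eqF.
set mu := (sg * al ^+ 2 / be `^ p) `^ (p - 1)^-1.
have base0 : 0 < sg * al ^+ 2 / be `^ p by rewrite divr_gt0 ?mulr_gt0 ?exprn_gt0 ?powR_gt0.
have mu0 : 0 < mu by rewrite powR_gt0.
have mup : mu `^ (p - 1) = sg * al ^+ 2 / be `^ p.
  by rewrite -powRrM mulVf ?powRr1 ?ltW // subr_eq0 gt_eqF.
apply: (not_right_symmetric_of us (ysupp mu) xp xnz).
  by rewrite grad_from_two_point // mup divfK ?subrr ?rmorph0 // gt_eqF // powR_gt0.
rewrite grad_to_two_point // re_emb subr_eq0; apply: contra_neq sgc => al_eq.
have muc : mu = c by rewrite /c al_eq mulfK // gt_eqF // powR_gt0.
by rewrite -muc mup divfK ?mulfK // ?gt_eqF ?powR_gt0 ?exprn_gt0.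
Qed.

Lemma not_single_supported_two_nonzero x : ~ @single_supported _ V x ->
  exists i j, [/\ i != j, x i != 0 & x j != 0].
Proof.
move=> ns; have [[n xn]|x0] := pselect (exists n, x n != 0); last first.
  case: ns; exists 0%N, (x 0%N); split=> // k _.
  by have [//|xk] := eqVneq (x k) 0; case: x0; exists k.
have [[j [jn xj]]|nj] := pselect (exists j, j != n /\ x j != 0).
  by exists n, j; rewrite eq_sym.
case: ns; exists n, (x n); split=> // k /eqP kn.
by have [//|xk] := eqVneq (x k) 0; case: nj; exists k.
Qed.

Lemma symmetric_iff_single_supported x : p != 2 -> dim_ge2 V -> in_lp re ip p x ->
  (left_symmetric re ip p x <-> @single_supported _ V x) /\
  (right_symmetric re ip p x <-> @single_supported _ V x).
Proof.
move=> p2 dim xp; have [ss|ns] := pselect (@single_supported _ V x).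
  have [n [_ [_ x0]]] := ss; have {}x0 k : k != n -> x k = 0 by move/eqP; apply: x0.
  split; split=> // _.
    exact: single_supported_left_symmetric x0 xp.
  exact: single_supported_right_symmetric x0 xp.
have [i [j [ij ai bj]]] := not_single_supported_two_nonzero ns.
have [nl nr] := not_symmetric_of_two_nonzero p2 dim ij ai bj xp.
by split; split=> H; [case: (nl H) | case: (ns H) | case: (nr H) | case: (ns H)].
Qed.

End InnerProductSpace.

Lemma cor318_for_scalar (V : lmodType K) : cor318_for re cj V.
Proof.
move=> ip [ipH _] dim p p1 p2 x xp.
exact: symmetric_iff_single_supported.
Qed.

End Scalars.

Theorem corollary3p18 (R : realType) :
  (forall V : lmodType R, cor318_for (@id R) (@id R) V) /\
  (forall V : lmodType (complex.complex R),
      cor318_for (@complex.Re R) (@complex.conjc R) V).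
Proof.
split=> V.
  apply: (@cor318_for_scalar R R idfun idfun idfun) => // [a|a /eqP].
    by rewrite /= -expr2 sqr_ge0.
  by rewrite mulf_eq0 orbb => /eqP.
apply: (@cor318_for_scalar R _ (real_complex R) (@conjc R) (@complex.Re R)).
- by move=> r [a1 a2] /=; rewrite mul0r subr0.
- by [].
- by move=> r /=; rewrite oppr0.
- by move=> [].
- by move=> [a1 a2] /=; nra.
- move=> [a1 a2] /= h.
  have a10 : a1 = 0 by nra.
  have a20 : a2 = 0 by nra.
  by rewrite a10 a20.
- by move=> [a1 a2] [] a2E; have -> : a2 = 0 by lra.
Qed.
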